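(* Let $G$ be a 3-connected graph other than $K_{3,3}$, let $N$ be a maximal 3-chop of $G$, and let $\sigma$ be a splitting star of $N$ with torso $X$. If $X$ has at least five vertices, then $X$ is internally 4-connected.
   Context: All graphs are finite and simple. A separation of $G$ is an unordered pair $\{A,B\}$ with $A\cup B=V(G)$ and no edge between $A\setminus B$ and $B\setminus A$; its order is $|A\cap B|$; a 3-separation has order exactly 3; it is proper if $A\setminus B\ne\emptyset\ne B\setminus A$. For oriented separations, $(A,B)\le(C,D)$ iff $A\subseteq C$ and $B\supseteq D$. Two separations are nested if some orientations of them are $\le$-comparable; a nested set has pairwise nested elements. A star is a set $\sigma$ of oriented separations with $(A,B)\le(D,C)$ for all distinct $(A,B),(C,D)\in\sigma$; its bag is $\bigcap_{(A,B)\in\sigma}B$ ($=V(G)$ if $\sigma$ is empty); its torso is obtained from the subgraph induced on the bag by making each separator $A\cap B$, $(A,B)\in\sigma$, a clique. A splitting star of a set $S$ of separations is a star $\sigma$ of orientations of elements of $S$ such that every $\{C,D\}\in S$ has an orientation $\le$ some element of $\sigma$. A proper 3-separation $\{A,B\}$ of a 3-connected graph is claw-free if both $G[A]$ and $G[B]$ contain a cycle. A set of proper 3-separations is claw-freeable if it can be enumerated $s_0,\dots,s_n$ so that each $s_i$ is claw-free or shares at least two separator vertices with some $s_j$, $j<i$. A 3-chop of $G$ is a claw-freeable nested set of proper 3-separations of $G$; it is maximal if it is not a proper subset of another 3-chop of $G$. A graph is internally 4-connected if it is 3-connected, has more than four vertices, and every proper 3-separation $\{A,B\}$ has independent separator and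 satisfies $|A\setminus B|=1$ or $|B\setminus A|=1$. *)

(* finite simple graphs as symmetric irreflexive relations
   on a finType; all graph notions are relative to a vertex set V. *)
From mathcomp Require Import all_boot.
Set Implicit Arguments. Unset Strict Implicit. Unset Printing Implicit Defensive.

Section Graphs.
Variable T : finType.
Notation sep := ({set T} * {set T})%type.

Definition restrict (e : rel T) (S : {set T}) : rel T :=
  [rel x y | [&& x \in S, y \in S & e x y]].

Definition connected_on (e : rel T) (S : {set T}) : Prop :=
  forall x y, x \in S -> y \in S -> connect (restrict e S) x y.

Definition k_connected (k : nat) (V : {set T}) (e : rel T) : Prop :=
  k < #|V| /\ forall X : {set T}, X \subset V -> #|X| < k -> connected_on e (V :\: X).

Definition separation (V : {set T}) (e : rel T) (s : sep) : Prop :=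
  s.1 :|: s.2 = V /\
  forall x y, x \in s.1 :\: s.2 -> y \in s.2 :\: s.1 -> ~~ e x y.

Definition separator (s : sep) : {set T} := s.1 :&: s.2.

Definition proper_3sep (V : {set T}) (e : rel T) (s : sep) : Prop :=
  [/\ separation V e s, #|separator s| = 3,
      s.1 :\: s.2 != set0 & s.2 :\: s.1 != set0].

Definition le_sep (s t : sep) : bool := (s.1 \subset t.1) && (t.2 \subset s.2).
Definition flip (s : sep) : sep := (s.2, s.1).

Definition nested (s t : sep) : bool :=
  [|| le_sep s t, le_sep s (flip t), le_sep (flip s) t, le_sep (flip s) (flip t),
      le_sep t s, le_sep (flip t) s, le_sep t (flip s) | le_sep (flip t) (flip s)].

Definition has_cycle_in (e : rel T) (A : {set T}) : Prop :=
  exists c : seq T, [/\ 3 <= size c, uniq c, {subset c <= A} & cycle e c].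

Definition claw_free (e : rel T) (s : sep) : Prop :=
  proper_3sep [set: T] e s /\ has_cycle_in e s.1 /\ has_cycle_in e s.2.

(* A set of unordered separations is represented by the set N of all
   orientations of its elements; N must be closed under flipping. *)
Definition sym_set (N : {set sep}) : Prop := forall s, (s \in N) = (flip s \in N).

(* claw-freeable: N can be enumerated (by representatives, one orientation
   each) s_0, ..., s_n such that each s_i is claw-free or shares at least two
   separator vertices with some earlier s_j. *)
Definition claw_freeable (e : rel T) (N : {set sep}) : Prop :=
  exists l : seq sep,
    [/\ {subset l <= N},
        (forall s, s \in N -> (s \in l) || (flip s \in l)) &
        forall i, i < size l ->
          claw_free e (nth (set0, set0) l i) \/
          exists2 j, j < i &
            2 <= #|separator (nth (set0, set0) l i) :&: separator (nth (set0, set0) l j)|].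

Definition three_chop (e : rel T) (N : {set sep}) : Prop :=
  [/\ sym_set N,
      (forall s, s \in N -> proper_3sep [set: T] e s),
      (forall s t, s \in N -> t \in N -> nested s t) &
      claw_freeable e N].

Definition max_three_chop (e : rel T) (N : {set sep}) : Prop :=
  three_chop e N /\ forall N', three_chop e N' -> ~~ (N \proper N').

Definition star (sigma : {set sep}) : Prop :=
  forall s t, s \in sigma -> t \in sigma -> s != t -> le_sep s (flip t).

Definition bag (sigma : {set sep}) : {set T} := \bigcap_(s in sigma) s.2.

Definition torso_rel (e : rel T) (sigma : {set sep}) : rel T :=
  [rel x y | e x y ||
     ((x != y) && [exists s in sigma, (x \in separator s) && (y \in separator s)])].

Definition splitting_star (N sigma : {set sep}) : Prop :=
  [/\ sigma \subset N, star sigma &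
      forall t, t \in N -> exists2 s, s \in sigma & le_sep t s || le_sep (flip t) s].

Definition internally_4_connected (V : {set T}) (e : rel T) : Prop :=
  [/\ k_connected 3 V e, 4 < #|V| &
      forall s, proper_3sep V e s ->
        (forall x y, x \in separator s -> y \in separator s -> ~~ e x y) /\
        (#|s.1 :\: s.2| = 1 \/ #|s.2 :\: s.1| = 1)].

Definition isK33 (e : rel T) : Prop :=
  #|T| = 6 /\ exists P : {set T}, #|P| = 3 /\ forall x y, e x y = ((x \in P) != (y \in P)).

End Graphs.

From mathcomp Require Import all_boot zify.
From Stdlib Require Import Classical.
Set Implicit Arguments. Unset Strict Implicit. Unset Printing Implicit Defensive.

(* A proper 3-separation [s0] of the torso lifts to a proper 3-separation [u] of
   [G] with the same separator: every separator of [sigma] is a clique of the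
   torso, hence lies in one side of [s0], and the part of [G] behind it is
   glued to that side.  Then [u] is nested with [N] but not in [N], so by
   maximality [u] is not claw-free and meets every separator of [N], in
   particular every separator of [sigma], in at most one vertex.  The latter
   makes the separator independent in the torso.  The former gives a side of
   [u] inducing a forest; degree counting against the forest bound in the
   3-connected graph [G] shows that this side has a single inner vertex and an
   independent separator.  The torso itself is 3-connected because a path of
   [G] leaving the bag through a separator of [sigma] can be short-cut along
   the clique on that separator. *)

Lemma connect_pred_ind (T : finType) (R : rel T) (P : T -> Prop) x :
  P x -> (forall y z, P y -> R y z -> P z) -> forall y, connect R x y -> P y.
Proof.
move=> Px step y /connectP [p pp ->].
elim/last_ind: p pp => [|p z IH] //=.
rewrite rcons_path => /andP [pp r]; rewrite last_rcons.
exact: step (IH pp) r.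
Qed.

Lemma connect_exit (T : finType) (R : rel T) (P : {set T}) x y :
  connect R x y -> x \in P -> y \notin P ->
  exists y0 z, [/\ y0 \in P, z \notin P & R y0 z].
Proof.
move=> cxy xP yP.
have := @connect_pred_ind T R
  (fun y => y \in P \/ exists y0 z, [/\ y0 \in P, z \notin P & R y0 z]) x (or_introl xP).
case/(_ _ y cxy)=> //; last by rewrite (negbTE yP).
move=> y1 z [y1P|exit] r; last by right.
by case zP: (z \in P); [left | right; exists y1, z; rewrite zP].
Qed.

Section Separations.
Variable T : finType.
Implicit Types (s t u : {set T} * {set T}) (V : {set T}) (e : rel T).

Lemma flipK s : flip (flip s) = s.
Proof. by case: s. Qed.

Lemma separator_flip s : separator (flip s) = separator s.
Proof. by rewrite /separator setIC. Qed.

Lemma le_sep_trans s t u : le_sep s t -> le_sep t u -> le_sep s u.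
Proof.
case/andP=> [st1 ts2] /andP [tu1 ut2].
by apply/andP; split; [apply: subset_trans st1 tu1 | apply: subset_trans ut2 ts2].
Qed.

Lemma nestedC s t : nested s t = nested t s.
Proof. by rewrite /nested; do 8!case: (le_sep _ _). Qed.

Lemma nested_flipr s t : nested s t -> nested s (flip t).
Proof. by rewrite /nested !flipK; do 8!case: (le_sep _ _). Qed.

Lemma nested_refl s : nested s s.
Proof. by rewrite /nested /le_sep !subxx. Qed.

Lemma nested_flip_refl s : nested s (flip s).
Proof. by rewrite /nested flipK /le_sep !subxx !orbT. Qed.

Lemma separation_flip V e s : symmetric e -> separation V e s -> separation V e (flip s).
Proof.
move=> esym [cover noedge]; split; first by rewrite /= setUC.
by move=> x y /= xs ys; rewrite esym; apply: noedge.
Qed.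

Lemma proper_3sep_flip V e s : symmetric e -> proper_3sep V e s -> proper_3sep V e (flip s).
Proof.
move=> esym [sep3 card3 n1 n2]; split=> //; first exact: separation_flip.
by rewrite separator_flip.
Qed.

Lemma separation_nbr V e s x y : separation V e s ->
  x \in s.1 :\: s.2 -> e x y -> y \in V -> y \in s.1.
Proof.
case=> cover noedge xD exy yV; apply/negPn/negP => yn1.
have : y \in s.2 :\: s.1 by rewrite inE yn1 /=; move: yV; rewrite -cover inE (negbTE yn1).
by move/(noedge _ _ xD); rewrite exy.
Qed.

End Separations.

Section Acyclic.
Variable T : finType.
Variable e : rel T.
Hypothesis esym : symmetric e.
Hypothesis eirr : irreflexive e.

Definition deg_in (W : {set T}) a := #|[set b in W | e a b]|.
Definition deg_sum (W : {set T}) := \sum_(a in W) deg_in W a.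

(* A path [x :: q] in an acyclic [W] can be prolonged at [x] unless [x] is a
   leaf: a second neighbour of [x] on [q] would close a cycle. *)
Lemma acyclic_path_extend (W : {set T}) x q : ~ has_cycle_in e W -> uniq (x :: q) ->
  {subset x :: q <= W} -> path e x q ->
  deg_in W x <= 1 \/ exists2 y, y \in W & (y \notin x :: q) && e x y.
Proof.
move=> acyc u sub pq.
case: (leqP (deg_in W x) 1) => hd; first by left.
case: (boolP [exists y, [&& y \in W, y \notin x :: q & e x y]]).
  by case/existsP=> y /and3P [yW ynq exy]; right; exists y; rewrite ?ynq.
rewrite negb_exists => /forallP nbr_on_q; exfalso; apply: acyc.
have : 0 < #|[set b in W | e x b] :\ head x q|.
  by move: hd; rewrite /deg_in (cardsD1 (head x q)); case: (_ \in _); lia.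
case/card_gt0P=> y; rewrite !inE => /and3P [ynh yW exy].
have yq : y \in q.
  move: (nbr_on_q y); rewrite yW exy /= andbT negbK inE => /orP [/eqP yx|//].
  by move: exy; rewrite yx eirr.
case/splitPr: yq pq u sub ynh => q1 q2.
case: q1 => [|z q1]; first by rewrite /= eqxx.
move=> pq u sub _.
exists [:: x, z & rcons q1 y]; split.
- by rewrite /= size_rcons.
- apply: (subseq_uniq _ u).
  have -> : [:: x, z & rcons q1 y] = [:: x, z & q1] ++ [:: y] by rewrite /= cats1.
  have -> : [:: x, z & q1 ++ y :: q2] = ([:: x, z & q1] ++ [:: y]) ++ q2 by rewrite /= -catA.
  exact: prefix_subseq.
- move=> w; rewrite !inE mem_rcons inE => hw; apply: sub; rewrite !inE mem_cat !inE.
  by case/or3P: hw => [->|->|/orP [->|->]]; rewrite ?orbT.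
- move: pq; rewrite cat_path => /andP [p1 /andP [p2 _]].
  change (path e x (rcons (rcons (z :: q1) y) x)).
  by rewrite !rcons_path p1 p2 last_rcons esym.
Qed.

Lemma acyclic_has_leaf (W : {set T}) x : ~ has_cycle_in e W -> x \in W ->
  exists2 w, w \in W & deg_in W w <= 1.
Proof.
move=> acyc xW.
suff: forall n x q, #|W| - size (x :: q) <= n -> uniq (x :: q) -> {subset x :: q <= W} ->
    path e x q -> exists2 w, w \in W & deg_in W w <= 1.
  by move/(_ #|W| x [::]); apply=> //; [lia | move=> z; rewrite inE => /eqP ->].
elim=> [|n IH] y q hs u sub pq.
all: case: (acyclic_path_extend acyc u sub pq) => [leaf|[z zW /andP [znq eyz]]];
  first by exists y => //; apply: sub; rewrite inE eqxx.
all: have uz : uniq (z :: y :: q) by rewrite cons_uniq znq u.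
all: have subz : {subset z :: y :: q <= W} by move=> v; rewrite inE => /orP [/eqP ->|/sub].
- have : size (z :: y :: q) <= #|W|.
    by rewrite -(card_uniqP uz); apply/subset_leq_card/subsetP.
  by move: hs => /=; lia.
- by apply: (IH z (y :: q)) => //=; [move: hs => /=; lia | rewrite pq andbT esym].
Qed.

Lemma sum_nat_pred_card (A : {set T}) (P : pred T) :
  \sum_(a in A) (P a : nat) = #|[set a in A | P a]|.
Proof.
rewrite -sum1_card big_mkcond /= [RHS]big_mkcond /=.
by apply: eq_bigr => a _; rewrite !inE; case: (a \in A); case: (P a).
Qed.

Lemma deg_inD1 (W : {set T}) w a : w \in W -> deg_in W a = e a w + deg_in (W :\ w) a.
Proof.
move=> wW; rewrite /deg_in (cardsD1 w) !inE wW /=; congr (_ + _).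
by apply: eq_card => b; rewrite !inE; case: (b == w).
Qed.

Lemma deg_sumD1 (W : {set T}) w : w \in W -> deg_sum W = deg_sum (W :\ w) + 2 * deg_in W w.
Proof.
move=> wW; rewrite /deg_sum (big_setD1 _ wW) /=.
under eq_bigr => a _ do rewrite (deg_inD1 a wW).
rewrite big_split /= sum_nat_pred_card.
have -> : #|[set a in W :\ w | e a w]| = deg_in W w.
  by rewrite (deg_inD1 w wW) eirr /deg_in; apply: eq_card => b; rewrite !inE esym.
lia.
Qed.

Lemma acyclic_deg_sum (W : {set T}) : ~ has_cycle_in e W -> W != set0 ->
  deg_sum W + 2 <= 2 * #|W|.
Proof.
move: {2}#|W| (erefl #|W|) => n; elim: n W => [|n IH] W hn acyc.
  by move/eqP: hn; rewrite cards_eq0 => ->.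
case/set0Pn=> x xW; have [w wW leaf] := acyclic_has_leaf acyc xW.
rewrite (deg_sumD1 wW) (cardsD1 w W) wW.
have acyc' : ~ has_cycle_in e (W :\ w).
  by case=> c [c3 cu cW cc]; apply: acyc; exists c; split=> // z /cW /setD1P [].
case: (eqVneq (W :\ w) set0) => [W0|W0].
  rewrite (deg_inD1 w wW) W0 /deg_sum big_set0 eirr cards0 /deg_in.
  by rewrite (@eq_card0 _ [set b in set0 | e w b]) // => b; rewrite !inE.
have hn' : #|W :\ w| = n by move: (cardsD1 w W); rewrite wW hn; lia.
by move: (IH _ hn' acyc' W0); lia.
Qed.

End Acyclic.

Section ThreeConnected.
Variable T : finType.
Variable e : rel T.
Hypothesis esym : symmetric e.
Hypothesis eirr : irreflexive e.
Hypothesis conn3 : k_connected 3 [set: T] e.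

Lemma k3_connected_deg a : 3 <= #|[set b | e a b]|.
Proof.
case: conn3 => hT hc; rewrite leqNgt; apply/negP => small.
have : 0 < #|~: ([set b | e a b] :|: [set a])|.
  rewrite cardsCs setCK; move: hT; rewrite cardsT.
  by move: (leq_card_setU [set b | e a b] [set a]).1; rewrite cards1; lia.
case/card_gt0P => c; rewrite !inE negb_or => /andP [nac nca].
have := hc [set b | e a b] (subsetT _) small a c.
rewrite !inE eirr nac => /(_ isT isT) cac.
have := connect_exit (P := [set a]) cac; rewrite !inE eqxx nca => /(_ isT isT).
case=> y0 [z [/set1P -> za /= /and3P [_]]].
by rewrite !inE andbT => /negbTE ->.
Qed.

Lemma separator_nbr_left (u : {set T} * {set T}) x : proper_3sep [set: T] e u ->
  x \in separator u -> exists2 y, y \in u.1 :\: u.2 & e x y.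
Proof.
case: conn3 => _ hc [hs h3 /set0Pn [d dD] /set0Pn [b bB]] xS.
have small : #|separator u :\ x| < 3 by move: (cardsD1 x (separator u)); rewrite xS h3; lia.
have notinS z : z \in u.1 :\: u.2 \/ z \in u.2 :\: u.1 -> z \notin separator u :\ x.
  by rewrite /separator !inE; case: (z \in u.1); case: (z \in u.2); rewrite ?andbF //; case.
have cdb := hc _ (subsetT _) small d b.
have /cdb {}cdb : d \in [set: T] :\: (separator u :\ x) by rewrite in_setD in_setT notinS //; left.
have /cdb {}cdb : b \in [set: T] :\: (separator u :\ x) by rewrite in_setD in_setT notinS //; right.
have [|y0 [z [y0D zD]]] := connect_exit cdb dD.
  by move: bB; rewrite !inE => /andP [/negbTE ->]; rewrite andbF.
move=> /= /and3P [_]; rewrite !inE /= => zZ ey0z.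
have z1 : z \in u.1 by apply: (separation_nbr hs y0D ey0z); rewrite inE.
have z2 : z \in u.2 by move: zD; rewrite inE z1 andbT negbK.
have /eqP zx : z == x by move: zZ; rewrite z1 z2 !andbT negbK.
by exists y0 => //; rewrite -zx esym.
Qed.

Lemma inner_deg_in (u : {set T} * {set T}) a : separation [set: T] e u ->
  a \in u.1 :\: u.2 -> 3 <= deg_in e u.1 a.
Proof.
move=> hs aD; apply: (leq_trans (k3_connected_deg a)); apply: subset_leq_card.
by apply/subsetP => b; rewrite !inE => eab; rewrite eab andbT (separation_nbr hs aD eab) ?inE.
Qed.

(* Separator vertices have degree at least 1 and inner vertices degree at
   least 3 in [u.1], against the forest bound. *)
Lemma acyclic_side_card (u : {set T} * {set T}) : proper_3sep [set: T] e u ->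
  ~ has_cycle_in e u.1 -> #|u.1 :\: u.2| <= 1.
Proof.
move=> pu acyc; have [hs h3 Dn0 _] := pu.
have degS a : a \in separator u -> 1 <= deg_in e u.1 a.
  move=> aS; have [y yD eay] := separator_nbr_left pu aS.
  by apply/card_gt0P; exists y; rewrite !inE eay andbT; case/setDP: yD.
have card1 : #|u.1| = #|u.1 :\: u.2| + #|separator u|.
  by rewrite -(cardsID u.2 u.1) /separator addnC.
have lower : #|separator u| + 3 * #|u.1 :\: u.2| <= deg_sum e u.1.
  rewrite /deg_sum (bigID (mem u.2)) /=; apply: leq_add.
    rewrite -sum1_card; apply: (@leq_trans (\sum_(a in separator u) deg_in e u.1 a)).
      by apply: leq_sum => a /degS.
    by rewrite [X in _ <= X](eq_bigl (mem (separator u))) // => a; rewrite !inE.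
  rewrite mulnC -sum_nat_const; apply: (@leq_trans (\sum_(a in u.1 :\: u.2) deg_in e u.1 a)).
    by apply: leq_sum => a /(inner_deg_in hs).
  by rewrite [X in _ <= X](eq_bigl (mem (u.1 :\: u.2))) // => a; rewrite !inE andbC.
have u1n0 : u.1 != set0.
  by case/set0Pn: Dn0 => d /setDP [d1 _]; apply/set0Pn; exists d.
by move: (acyclic_deg_sum esym eirr acyc u1n0); lia.
Qed.

(* The single inner vertex [v] sees the whole separator, so an edge inside the
   separator would close a triangle. *)
Lemma acyclic_side_independent (u : {set T} * {set T}) : proper_3sep [set: T] e u ->
  ~ has_cycle_in e u.1 -> forall x y, x \in separator u -> y \in separator u -> ~~ e x y.
Proof.
move=> pu acyc x y xS yS; apply/negP => exy.
have [hs h3 /set0Pn [v vD] _] := pu.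
have NvS : [set b in u.1 | e v b] = separator u.
  apply/eqP; rewrite eqEcard h3 inner_deg_in // andbT.
  apply/subsetP => b; rewrite !inE => /andP [b1 evb]; rewrite b1 /=.
  apply/negPn/negP => b2.
  have bD : b \in u.1 :\: u.2 by rewrite inE b1 b2.
  by move: evb; rewrite ((card_le1_eqP (acyclic_side_card pu acyc)) b v bD vD) eirr.
have evx : e v x by move: xS; rewrite -NvS inE => /andP [].
have evy : e v y by move: yS; rewrite -NvS inE => /andP [].
have vnS z : z \in separator u -> v != z.
  by case/setIP => _ z2; apply: contraTneq vD => ->; rewrite inE z2.
apply: acyc; exists [:: v; x; y]; split => //.
- rewrite /= !inE !negb_or (vnS _ xS) (vnS _ yS) /= andbT.
  by apply: contraTneq exy => ->; rewrite eirr.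
- move=> z; rewrite !inE => /or3P [] /eqP ->; first by case/setDP: vD.
  + by case/setIP: xS.
  + by case/setIP: yS.
- by rewrite /= evx exy esym evy.
Qed.

Lemma not_claw_free_small_side (u : {set T} * {set T}) : proper_3sep [set: T] e u ->
  ~ claw_free e u ->
  (#|u.1 :\: u.2| <= 1 \/ #|u.2 :\: u.1| <= 1) /\
  (forall x y, x \in separator u -> y \in separator u -> ~~ e x y).
Proof.
move=> pu not_cf; case: (classic (has_cycle_in e u.1)) => cyc1.
  have acyc2 : ~ has_cycle_in e u.2 by move=> cyc2; apply: not_cf.
  have pu' := proper_3sep_flip esym pu.
  split; first by right; apply: (acyclic_side_card pu').
  by rewrite -separator_flip; apply: (acyclic_side_independent pu').
by split; [left; apply: acyclic_side_card | apply: acyclic_side_independent].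
Qed.

End ThreeConnected.

Section Torso.
Variable T : finType.
Variable e : rel T.
Hypothesis esym : symmetric e.
Variable sigma : {set {set T} * {set T}}.
Hypothesis sigma_sep : forall s, s \in sigma -> separation [set: T] e s.
Hypothesis sigma_star : star sigma.

Local Notation X := (bag sigma).
Local Notation torso := (torso_rel e sigma).

Lemma star_sub s t : s \in sigma -> t \in sigma -> s != t -> s.1 \subset t.2.
Proof. by move=> hs ht hne; case/andP: (sigma_star hs ht hne). Qed.

Lemma bag_sub s : s \in sigma -> X \subset s.2.
Proof. exact: bigcap_inf. Qed.

Lemma separator_sub_bag s : s \in sigma -> separator s \subset X.
Proof.
move=> hs; apply/subsetP => x /setIP [x1 x2].
apply/bigcapP => t ht; case: (eqVneq s t) => [<-//|hne].
exact: subsetP (star_sub hs ht hne) _ x1.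
Qed.

Lemma bag_separator s x : s \in sigma -> x \in s.1 -> x \in X -> x \in separator s.
Proof. by move=> hs x1 xX; rewrite inE x1 (subsetP (bag_sub hs)). Qed.

Lemma notin_bag x : x \notin X -> exists2 s, s \in sigma & x \in s.1 :\: s.2.
Proof.
move=> xX; have [s hs xs2] : exists2 s, s \in sigma & x \notin s.2.
  apply/exists_inP; apply: contraR xX => /exists_inPn all2.
  by apply/bigcapP => s /all2; rewrite negbK.
exists s => //; rewrite inE xs2 /=.
by case: (sigma_sep hs) => cover _; move: (in_setT x); rewrite -cover inE (negbTE xs2) orbF.
Qed.

Lemma torso_separator s a b : s \in sigma ->
  a \in separator s -> b \in separator s -> a != b -> torso a b.
Proof.
move=> hs ha hb hab; rewrite /torso_rel /= hab /=.
by apply/orP; right; apply/exists_inP; exists s => //; apply/andP.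
Qed.

(* A walk of [G - Z] between bag vertices is shadowed in [torso - Z]: whenever
   the walk is outside the bag, inside the first part [s.1 :\: s.2] of some
   [s] in [sigma], it is reached from a vertex of [separator s :\: Z]. *)
Lemma torso_connect Z x y : x \in X :\: Z -> y \in X ->
  connect (restrict e ([set: T] :\: Z)) x y -> connect (restrict torso (X :\: Z)) x y.
Proof.
move=> xXZ yX cxy.
pose C := connect (restrict torso (X :\: Z)) x.
pose P y := (y \in X -> C y) /\
  (forall s, s \in sigma -> y \in s.1 :\: s.2 -> exists2 w, w \in separator s :\: Z & C w).
have P0 : P x.
  split=> [_|s hs]; first exact: connect0.
  case/setDP=> _ xn2; case/setDP: xXZ => xX _.
  by case/negP: xn2; apply: subsetP (bag_sub hs) _ xX.
suff step a b : P a -> restrict e ([set: T] :\: Z) a b -> P b.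
  by case: (connect_pred_ind P0 step cxy) => /(_ yX).
case=> [Pa1 Pa2] /= /and3P [/setDP [_ aZ] /setDP [_ bZ] eab].
case: (boolP (a \in X)) => aX.
  split=> [bX|s hs bD].
    apply: connect_trans (Pa1 aX) (connect1 _).
    by rewrite /restrict /torso_rel /= !inE aZ bZ aX bX eab.
  exists a; last exact: Pa1.
  rewrite inE aZ bag_separator //.
  by apply: (separation_nbr (sigma_sep hs) bD); rewrite ?inE // esym.
have [s0 hs0 aD0] := notin_bag aX.
have [w /setDP [wS wZ] Cw] := Pa2 s0 hs0 aD0.
split=> [bX|s hs bD].
  have bS : b \in separator s0.
    by apply: bag_separator => //; apply: (separation_nbr (sigma_sep hs0) aD0 eab).
  case: (eqVneq w b) => [<-//|wb].
  apply: connect_trans Cw (connect1 _).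
  rewrite /restrict /= !inE wZ bZ (subsetP (separator_sub_bag hs0) _ wS) bX /=.
  exact: torso_separator hs0 wS bS wb.
apply: Pa2 => //.
have a1 : a \in s.1 by apply: (separation_nbr (sigma_sep hs) bD); rewrite ?inE // esym.
rewrite inE a1 andbT; apply: contra aX => a2.
by apply: (subsetP (separator_sub_bag hs)); rewrite inE a1 a2.
Qed.

Lemma torso_k3_connected : k_connected 3 [set: T] e -> 3 < #|X| ->
  k_connected 3 X torso.
Proof.
case=> _ conn3 big; split=> // Z _ small x y xXZ yXZ.
apply: torso_connect => //; first by case/setDP: yXZ.
by apply: conn3 => //; rewrite !inE; [case/setDP: xXZ => _ -> | case/setDP: yXZ => _ ->].
Qed.

Lemma torso_independent (S : {set T}) :
  (forall x y, x \in S -> y \in S -> ~~ e x y) ->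
  (forall s, s \in sigma -> #|S :&: separator s| < 2) ->
  forall x y, x \in S -> y \in S -> ~~ torso x y.
Proof.
move=> indep few x y xS yS; rewrite /= negb_or indep //=.
apply/negP => /andP [xy /exists_inP [s hs /andP [xs ys]]].
have := few s hs; rewrite ltnNge => /negP; apply.
have -> : 2 = #|[set x; y]| by rewrite cards2 xy.
by apply/subset_leq_card/subsetP => z /set2P [] ->; apply/setIP.
Qed.


Section Lift.
Variable s0 : {set T} * {set T}.
Hypothesis s0_proper : proper_3sep X torso s0.

Definition sigma_left := [set s in sigma | separator s \subset s0.1].
Definition liftL := s0.1 :|: \bigcup_(s in sigma_left) s.1.
Definition liftR := s0.2 :|: \bigcup_(s in sigma :\: sigma_left) s.1.

Lemma s0_cover : s0.1 :|: s0.2 = X.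
Proof. by case: s0_proper => [[]]. Qed.

Lemma s0L_bag x : x \in s0.1 -> x \in X.
Proof. by move=> h; rewrite -s0_cover inE h. Qed.

Lemma s0R_bag x : x \in s0.2 -> x \in X.
Proof. by move=> h; rewrite -s0_cover inE h orbT. Qed.

Lemma s0L_liftL x : x \in s0.1 -> x \in liftL.
Proof. by move=> h; rewrite inE h. Qed.

Lemma s0R_liftR x : x \in s0.2 -> x \in liftR.
Proof. by move=> h; rewrite inE h. Qed.

Lemma separator_sub_s0R s : s \in sigma -> s \notin sigma_left -> separator s \subset s0.2.
Proof.
move=> hs; rewrite inE hs /= => /subsetPn [y yS y1].
have y2 : y \in s0.2.
  by move: (subsetP (separator_sub_bag hs) _ yS); rewrite -s0_cover inE (negbTE y1).
apply/subsetP => x xS; apply/negPn/negP => x2.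
have x1 : x \in s0.1.
  by move: (subsetP (separator_sub_bag hs) _ xS); rewrite -s0_cover inE (negbTE x2) orbF.
case: s0_proper => [[_ noedge] _ _ _].
have := noedge x y; rewrite !inE x1 x2 y1 y2 => /(_ isT isT); apply/negP/negPn.
by apply: torso_separator hs xS yS _; apply: contraNneq x2 => ->.
Qed.

Lemma liftL_bag x : x \in liftL -> x \in X -> x \in s0.1.
Proof.
case/setUP => [//|/bigcupP [s /setIdP [hs sS] xs]] xX.
exact: subsetP sS _ (bag_separator hs xs xX).
Qed.

Lemma liftR_bag x : x \in liftR -> x \in X -> x \in s0.2.
Proof.
case/setUP => [//|/bigcupP [s /setDP [hs hsL] xs]] xX.
exact: subsetP (separator_sub_s0R hs hsL) _ (bag_separator hs xs xX).
Qed.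

Lemma lift_cover : liftL :|: liftR = [set: T].
Proof.
apply/eqP; rewrite eqEsubset subsetT /=; apply/subsetP => x _.
case: (boolP (x \in X)) => xX.
  by move: xX; rewrite -s0_cover !inE => /orP [->|->]; rewrite ?orbT.
have [s hs /setDP [x1 _]] := notin_bag xX.
case: (boolP (s \in sigma_left)) => hL; rewrite inE; apply/orP; [left|right];
  by rewrite inE; apply/orP; right; apply/bigcupP; exists s; rewrite // inE hL.
Qed.

Lemma lift_separator : separator (liftL, liftR) = separator s0.
Proof.
apply/setP => x; rewrite !in_setI /=; apply/andP/andP => [[xL xR]|[x1 x2]].
  case: (boolP (x \in X)) => xX; first by rewrite (liftL_bag xL xX) (liftR_bag xR xX).
  case/setUP: xL => [/s0L_bag xX'|/bigcupP [s hsL xs]].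
    by rewrite xX' in xX.
  case/setUP: xR => [/s0R_bag xX'|/bigcupP [t /setDP [ht htL] xt]].
    by rewrite xX' in xX.
  have hs : s \in sigma by case/setIdP: hsL.
  have hst : s != t by apply: contraNneq htL => <-.
  case/negP: xX; apply: (subsetP (separator_sub_bag ht)).
  by rewrite inE xt (subsetP (star_sub hs ht hst)).
by rewrite s0L_liftL // s0R_liftR.
Qed.

Lemma lift_edge_outside_bag x y : x \notin X -> e x y ->
  (x \in liftL /\ y \in liftL) \/ (x \in liftR /\ y \in liftR).
Proof.
move=> xX exy; have [s hs xD] := notin_bag xX.
have y1 : y \in s.1 by apply: (separation_nbr (sigma_sep hs) xD exy); rewrite inE.
have x1 : x \in s.1 by case/setDP: xD.
case: (boolP (s \in sigma_left)) => hL; [left|right];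
  by split; rewrite inE; apply/orP; right; apply/bigcupP; exists s; rewrite // inE hL.
Qed.

Lemma lift_separation : separation [set: T] e (liftL, liftR).
Proof.
split; first exact: lift_cover.
move=> x y /setDP [xL xnR] /setDP [yR ynL] /=; apply/negP => exy.
case: (boolP (x \in X)) => xX; last first.
  by case: (lift_edge_outside_bag xX exy) => [[_ yL]|[xR _]];
    [rewrite yL in ynL | rewrite xR in xnR].
case: (boolP (y \in X)) => yX; last first.
  rewrite esym in exy.
  by case: (lift_edge_outside_bag yX exy) => [[yL _]|[_ xR]];
    [rewrite yL in ynL | rewrite xR in xnR].
case: s0_proper => [[_ noedge] _ _ _].
have := noedge x y; rewrite !inE (liftL_bag xL xX) (liftR_bag yR yX).
rewrite (contra (@s0R_liftR x)) // (contra (@s0L_liftL y)) // => /(_ isT isT).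
by rewrite /torso_rel /= exy.
Qed.

Lemma lift_left_side : s0.1 :\: s0.2 \subset liftL :\: liftR.
Proof.
apply/subsetP => x /setDP [x1 x2]; rewrite inE s0L_liftL // andbT.
by apply: contra x2 => xR; apply: liftR_bag xR (s0L_bag x1).
Qed.

Lemma lift_right_side : s0.2 :\: s0.1 \subset liftR :\: liftL.
Proof.
apply/subsetP => x /setDP [x2 x1]; rewrite inE s0R_liftR // andbT.
by apply: contra x1 => xL; apply: liftL_bag xL (s0R_bag x2).
Qed.

Lemma lift_proper : proper_3sep [set: T] e (liftL, liftR).
Proof.
case: s0_proper => _ card3 /set0Pn [x xD] /set0Pn [y yD].
split; [exact: lift_separation | by rewrite lift_separator | |].
- by apply/set0Pn; exists x; apply: subsetP lift_left_side _ xD.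
- by apply/set0Pn; exists y; apply: subsetP lift_right_side _ yD.
Qed.

Lemma sigma_le_lift s : s \in sigma ->
  if s \in sigma_left then le_sep s (liftL, liftR) else le_sep s (liftR, liftL).
Proof.
move=> hs; case: ifP => hL; apply/andP; split => /=.
- by apply/subsetP => x xs; rewrite inE; apply/orP; right; apply/bigcupP; exists s.
- rewrite subUset (subset_trans _ (bag_sub hs)) /=; last exact/subsetP/s0R_bag.
  apply/bigcupsP => t /setDP [ht htL]; apply: star_sub => //.
  by apply: contraNneq htL => ->.
- apply/subsetP => x xs; rewrite inE; apply/orP; right; apply/bigcupP; exists s => //.
  by rewrite inE hL.
- rewrite subUset (subset_trans _ (bag_sub hs)) /=; last exact/subsetP/s0L_bag.
  apply/bigcupsP => t htL; have /setIdP [ht _] := htL; apply: star_sub => //.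
  by apply: contraFneq hL => <-.
Qed.

Lemma nested_lift t : (exists2 s, s \in sigma & le_sep t s || le_sep (flip t) s) ->
  nested t (liftL, liftR).
Proof.
case=> s hs /orP hle; have := sigma_le_lift hs; rewrite /nested.
by case: ifP => _ hsl; case: hle => /le_sep_trans /(_ hsl) ->; rewrite ?orbT.
Qed.

(* The bag lies in [s.2] but meets both [liftL :\: liftR] and [liftR :\: liftL]. *)
Lemma lift_not_le_sigma s : s \in sigma ->
  ~~ (le_sep (liftL, liftR) s || le_sep (flip (liftL, liftR)) s).
Proof.
move=> hs; case: s0_proper => _ _ /set0Pn [x xD] /set0Pn [y yD].
rewrite /le_sep /= negb_or !negb_and; apply/andP; split; apply/orP; right; apply/subsetPn.
- exists x; first by apply: subsetP (bag_sub hs) _ _; case/setDP: xD => /s0L_bag.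
  by case/setDP: (subsetP lift_left_side _ xD).
- exists y; first by apply: subsetP (bag_sub hs) _ _; case/setDP: yD => /s0R_bag.
  by case/setDP: (subsetP lift_right_side _ yD).
Qed.

Lemma torso_3sep_lift : exists2 u : {set T} * {set T},
  [/\ proper_3sep [set: T] e u, separator u = separator s0,
      s0.1 :\: s0.2 \subset u.1 :\: u.2 & s0.2 :\: s0.1 \subset u.2 :\: u.1] &
  (forall t, (exists2 s, s \in sigma & le_sep t s || le_sep (flip t) s) -> nested t u) /\
  (forall s, s \in sigma -> ~~ (le_sep u s || le_sep (flip u) s)).
Proof.
exists (liftL, liftR); split; [exact: lift_proper | exact: lift_separator |
  exact: lift_left_side | exact: lift_right_side | exact: nested_lift |
  exact: lift_not_le_sigma].
Qed.

End Lift.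

End Torso.

Section Chops.
Variable T : finType.
Variable e : rel T.
Hypothesis esym : symmetric e.
Implicit Types (N : {set {set T} * {set T}}) (u : {set T} * {set T}).

Lemma claw_freeable_add N u : claw_freeable e N ->
  (claw_free e u \/ exists2 t, t \in N & 2 <= #|separator u :&: separator t|) ->
  claw_freeable e (N :|: [set u; flip u]).
Proof.
move=> [l [lsub lcov lcond]] new; exists (rcons l u); split.
- move=> z; rewrite mem_rcons inE => /orP [/eqP ->|/lsub hz]; rewrite !inE ?eqxx ?orbT //.
  by rewrite hz.
- move=> s; rewrite !inE !mem_rcons !inE => /orP [/lcov /orP [->|->]|/orP [] /eqP ->];
    rewrite ?eqxx ?flipK ?eqxx ?orbT //.
- move=> i; rewrite size_rcons ltnS leq_eqVlt => /orP [/eqP ->|hi].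
    rewrite nth_rcons ltnn eqxx.
    case: new => [cf|[t ht share]]; [by left | right].
    have [tl|ftl] := orP (lcov t ht).
      by exists (index t l); rewrite ?index_mem // nth_rcons index_mem tl nth_index.
    exists (index (flip t) l); rewrite ?index_mem // nth_rcons index_mem ftl nth_index //.
    by rewrite separator_flip.
  rewrite nth_rcons hi; case: (lcond i hi) => [cf|[j hj share]]; [by left | right].
  by exists j; rewrite // nth_rcons (ltn_trans hj hi).
Qed.

Lemma three_chop_add N u : three_chop e N -> proper_3sep [set: T] e u ->
  (forall t, t \in N -> nested t u) ->
  (claw_free e u \/ exists2 t, t \in N & 2 <= #|separator u :&: separator t|) ->
  three_chop e (N :|: [set u; flip u]).
Proof.
move=> [Nsym Nprop Nnest Ncf] pu nu new.
have flip_eq s t : (flip s == t) = (s == flip t).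
  by apply/eqP/eqP => [<-|->]; rewrite flipK.
split; last exact: claw_freeable_add.
- move=> s; rewrite !inE -Nsym flip_eq [flip s == flip u]flip_eq flipK.
  by case: (s == u); case: (s == flip u); rewrite ?orbT ?orbF.
- move=> s; rewrite !inE => /orP [/Nprop //|/orP [] /eqP -> //].
  exact: proper_3sep_flip.
- move=> s t; rewrite !inE => /orP [hs|/orP [] /eqP ->] /orP [ht|/orP [] /eqP ->];
    rewrite ?nested_refl ?nested_flip_refl ?(nestedC (flip u) u) ?nested_flip_refl //.
  + exact: Nnest.
  + exact: nu.
  + exact/nested_flipr/nu.
  + by rewrite nestedC; apply: nu.
  + by rewrite nestedC; apply/nested_flipr/nu.
Qed.

Lemma max_three_chop_outside N u : max_three_chop e N -> proper_3sep [set: T] e u ->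
  (forall t, t \in N -> nested t u) -> u \notin N ->
  ~ claw_free e u /\ forall t, t \in N -> #|separator u :&: separator t| < 2.
Proof.
move=> [chop maximal] pu nu uN.
have not_new : ~ (claw_free e u \/ exists2 t, t \in N & 2 <= #|separator u :&: separator t|).
  move/(three_chop_add chop pu nu)/maximal/negP; apply; apply/properP.
  by split; [exact: subsetUl | exists u; rewrite ?inE ?eqxx ?orbT].
split=> [cf|t ht]; first by apply: not_new; left.
by rewrite ltnNge; apply/negP => share; apply: not_new; right; exists t.
Qed.

End Chops.

Theorem mainTheorem7 (T : finType) (e : rel T) :
  symmetric e -> irreflexive e ->
  k_connected 3 [set: T] e -> ~ isK33 e ->
  forall N : {set {set T} * {set T}}, max_three_chop e N ->
  forall sigma : {set {set T} * {set T}}, splitting_star N sigma ->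
  5 <= #|bag sigma| ->
  internally_4_connected (bag sigma) (torso_rel e sigma).
Proof.
move=> esym eirr conn3 _ N maxN sigma split_sigma big.
have [/subsetP sigmaN sigma_star sigma_splits] := split_sigma.
have [[_ N_proper _ _] _] := maxN.
have sigma_sep s : s \in sigma -> separation [set: T] e s.
  by move/sigmaN/N_proper; case.
split; [exact: (torso_k3_connected esym sigma_sep sigma_star conn3 (ltnW big)) |
  exact: big | move=> s0 ps0].
have [u [pu sep_u sideL sideR] [nested_u not_le_u]] :=
  torso_3sep_lift esym sigma_sep sigma_star ps0.
have uN : u \notin N by apply/negP => /sigma_splits [s /not_le_u /negP].
have [not_cf few] :=
  max_three_chop_outside esym maxN pu (fun t ht => nested_u t (sigma_splits t ht)) uN.
have [small indep] := not_claw_free_small_side esym eirr conn3 pu not_cf.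
have [_ _ /set0Pn [x xD] /set0Pn [y yD]] := ps0.
split.
- rewrite -sep_u; apply: torso_independent indep _ => s /sigmaN; exact: few.
- case: small => small; [left|right]; apply/eqP; rewrite eqn_leq card_gt0; apply/andP.
  + by split; [apply: leq_trans (subset_leq_card sideL) small | apply/set0Pn; exists x].
  + by split; [apply: leq_trans (subset_leq_card sideR) small | apply/set0Pn; exists y].
Qed.
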